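(* Let $F$ be a $2$-edge-coloured graph on $n\ge 2$ vertices which contains no alternating cycle. Then there is an ordering $v_1,\dots,v_n$ of $V(F)$ such that for every $1\le i\le n$ there is a colour $c_i\in\{\text{red},\text{blue}\}$ for which $v_i$ has fewer than $\log_2 n$ neighbours $v_j$ with $j>i$ such that the edge $\{v_i,v_j\}$ has colour $c_i$.
   Context: A $2$-edge-coloured graph is a finite simple graph each of whose edges is coloured red or blue. An alternating cycle is a cycle whose consecutive edges have alternating colours. *)

From mathcomp Require Import all_boot.
Set Implicit Arguments. Unset Strict Implicit. Unset Printing Implicit Defensive.

(* The edge
   set is red ∪ blue; each edge gets exactly one colour. *)
Definition two_edge_coloured (T : finType) (red blue : rel T) : Prop :=
  [/\ symmetric red, symmetric blue, irreflexive red, irreflexive blue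
    & forall x y, ~~ (red x y && blue x y)].

Definition colrel (T : finType) (red blue : rel T) (c : bool) : rel T :=
  if c then red else blue.

Definition alternating_cycle (T : finType) (red blue : rel T) (s : seq T) : Prop :=
  let k := size s in
  match s with
  | [::] => False
  | x0 :: _ =>
    [/\ 3 <= k, uniq s &
      forall i, i < k ->
        let a := nth x0 s i in
        let b := nth x0 s ((i + 1) %% k) in
        let c := nth x0 s ((i + 2) %% k) in
        (red a b && blue b c) || (blue a b && red b c)]
  end.

Definition has_alternating_cycle (T : finType) (red blue : rel T) : Prop :=
  exists s : seq T, alternating_cycle red blue s.

(* For naturals m and n >= 1:  m < log2 n  <->  2 ^ m < n. *)
Definition lt_log2 (m n : nat) : bool := 2 ^ m < n.

(* 1. Kotzig's theorem, for a graph with a perfect matching given by a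
      fixed-point-free involution [mu]: if no cycle alternates between
      matching and non-matching edges, some matching edge [y -- mu y] is the
      only edge leaving a set [A] of vertices (a bridge).  By induction: a
      pendant vertex is a bridge by itself; otherwise a greedy alternating
      walk closes a blossom, whose contraction is a smaller such graph, and
      bridges of the contraction lift back.
   2. The double cover of the coloured graph on a vertex set [S] (vertices
      [(v, c)], matching edges [(v, true) -- (v, false)], and
      [(v, c) -- (w, c)] for the edges [vw] of colour [c]) is such a graph;
      its alternating cycles project to alternating cycles of the coloured
      graph.  A bridge splits [S] minus a vertex [z] into two sides; the
      smaller one has fewer than [#|S| / 2] vertices, receives all edges of
      some colour at [z] and sees the rest of [S] only through [z].
   3. Induction along this splitting yields, in every nonempty [S], a vertex
      [v] and a colour [c] with [2 * 2 ^ deg_c(v, S) <= #|S| + 1]; removing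
      such vertices one at a time gives the ordering of the theorem. *)

From mathcomp Require Import all_boot.
From mathcomp Require Import zify.
Set Implicit Arguments. Unset Strict Implicit. Unset Printing Implicit Defensive.

Section Kotzig.
Variables (U : finType) (mu : U -> U).
Hypothesis muK : involutive mu.
Hypothesis mu_nfix : forall x, mu x != x.

Definition matching_free (s : seq U) := uniq s && all (fun x => mu x \notin s) s.

Lemma matching_free_sub s1 s2 :
  uniq s1 -> {subset s1 <= s2} -> matching_free s2 -> matching_free s1.
Proof.
move=> u1 sub /andP[_ /allP H]; apply/andP; split=> //; apply/allP=> x xs.
by apply/negP=> mx; have := H x (sub x xs); rewrite (sub _ mx).
Qed.

Lemma matching_free_rot k s : matching_free (rot k s) = matching_free s.
Proof.
rewrite /matching_free rot_uniq; congr (_ && _).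
by apply/allP/allP=> H x; [rewrite -(mem_rot k) => /H; rewrite mem_rot
                          | rewrite mem_rot => /H; rewrite -(mem_rot k)].
Qed.

Lemma matching_free_cons x s :
  matching_free (x :: s) = [&& x \notin s, mu x \notin s & matching_free s].
Proof.
rewrite /matching_free /= !inE (negbTE (mu_nfix x)) /=.
apply/idP/idP.
- case/and3P=> [/andP[xs us] mxs /allP H]; rewrite xs mxs us /=.
  by apply/allP=> y ys; have := H y ys; rewrite inE negb_or => /andP[].
- case/and3P=> xs mxs /andP[us /allP H]; rewrite xs us mxs /=.
  apply/allP=> y ys; rewrite inE negb_or H // andbT.
  by apply/eqP=> e; move: mxs; rewrite -e muK ys.
Qed.

Lemma matching_free_rcons x s :
  matching_free (rcons s x) = [&& x \notin s, mu x \notin s & matching_free s].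
Proof. by rewrite -rot1_cons matching_free_rot matching_free_cons. Qed.

Lemma matching_free_cat s1 s2 : matching_free s1 -> matching_free s2 ->
  (forall x, x \in s1 -> (x \notin s2) && (mu x \notin s2)) ->
  matching_free (s1 ++ s2).
Proof.
move=> /andP[u1 /allP a1] /andP[u2 /allP a2] H; apply/andP; split.
  rewrite cat_uniq u1 u2 /= andbT; apply/hasPn=> x xs2; apply/negP=> xs1.
  by case/andP: (H x xs1); rewrite xs2.
apply/allP=> x; rewrite mem_cat => /orP[xs|xs]; rewrite mem_cat negb_or.
  by rewrite a1 //; case/andP: (H x xs).
rewrite a2 // andbT; apply/negP=> mxs; case/andP: (H _ mxs)=> _.
by rewrite muK xs.
Qed.

Lemma matching_free_rev s : matching_free s -> matching_free (map mu (rev s)).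
Proof.
move=> /andP[us /allP H]; apply/andP; split.
  by rewrite map_inj_uniq ?rev_uniq //; exact: (can_inj muK).
apply/allP=> x /mapP[y]; rewrite mem_rev => ys ->.
rewrite (mem_map (can_inj muK)) mem_rev.
by apply/negP=> mxs; have := H _ ys; rewrite mxs.
Qed.

(* An
   alternating step from [x] to [y] first crosses the matching edge at [x]
   and then an [E]-edge from [mu x] to [y]. *)
Definition alt_step (E : rel U) : rel U := fun x y => E (mu x) y.

Definition matched_graph (V : {set U}) (E : rel U) :=
  [/\ forall x y, E x y = E y x, forall x, ~~ E x x,
      forall x, x \in V -> mu x \in V & forall x, x \in V -> E x (mu x)].

Definition alt_cycle (V : {set U}) (E : rel U) (s : seq U) :=
  [&& 1 < size s, matching_free s, all (mem V) s & cycle (alt_step E) s].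

Definition bridge (V : {set U}) (E : rel U) (y : U) (A : {set U}) :=
  [/\ y \in A, A \subset V, mu y \notin A &
      forall u w, u \in A -> w \in V -> w \notin A -> E u w -> u = y /\ w = mu y].

Lemma alt_step_rev E : (forall x y, E x y = E y x) ->
  forall x y, alt_step E x y = alt_step E (mu y) (mu x).
Proof. by move=> sym x y; rewrite /alt_step muK sym. Qed.

Lemma alt_path_rev E : (forall x y, E x y = E y x) -> forall x s y,
  path (alt_step E) x (rcons s y) ->
  path (alt_step E) (mu y) (rcons (map mu (rev s)) (mu x)).
Proof.
move=> sym x s; elim: s x => [|z s IH] x y /=; first by rewrite !andbT alt_step_rev.
case/andP=> h1 h2.
by rewrite rev_cons map_rcons rcons_path last_rcons (IH z y h2) /= -alt_step_rev.
Qed.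

Lemma alt_cycle_rev V E s :
  matched_graph V E -> alt_cycle V E s -> alt_cycle V E (map mu (rev s)).
Proof.
case=> sym _ muV _ /and4P[sz uq aV cy]; apply/and4P; split.
- by rewrite size_map size_rev.
- exact: matching_free_rev.
- by apply/allP=> x /mapP[y]; rewrite mem_rev => ys ->; apply/muV/(allP aV).
case: s sz uq aV cy => [//|x t] _ _ _ /= /(alt_path_rev sym) back.
by rewrite rev_cons map_rcons -rot1_cons rot_cycle.
Qed.

Lemma alt_cycle_rot V E k s : alt_cycle V E (rot k s) = alt_cycle V E s.
Proof.
rewrite /alt_cycle size_rot matching_free_rot rot_cycle; congr [&& _, _, _ & _].
by apply/allP/allP=> H x; [rewrite -(mem_rot k) | rewrite mem_rot]; apply: H.
Qed.

Lemma bridge_compl V E y A :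
  matched_graph V E -> bridge V E y A -> bridge V E (mu y) (V :\: A).
Proof.
case=> sym _ muV _ [yA AV myA cross].
have yV : y \in V := subsetP AV y yA.
split.
- by rewrite in_setD myA muV.
- exact: subsetDl.
- by rewrite in_setD muK yA.
move=> u w; rewrite in_setD => /andP[uA uV] wV.
rewrite in_setD wV andbT negbK => wA Euw.
by have [-> ->] := cross w u wA uV uA (etrans (sym _ _) Euw); rewrite muK.
Qed.

Definition blossom (V : {set U}) (E : rel U) (a : U) (bl : seq U) :=
  [&& bl != [::], matching_free (a :: bl), all (mem V) (a :: bl)
    & path (alt_step E) a (rcons bl (mu a))].

Definition body (bl : seq U) := [set x | (x \in bl) || (mu x \in bl)].

Lemma in_body bl x : (x \in body bl) = (x \in bl) || (mu x \in bl).
Proof. by rewrite inE. Qed.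

Lemma body_mu bl x : (mu x \in body bl) = (x \in body bl).
Proof. by rewrite !in_body muK orbC. Qed.

Lemma blossom_rev V E a bl :
  matched_graph V E -> blossom V E a bl -> blossom V E a (map mu (rev bl)).
Proof.
case=> sym _ muV _ /and4P[ne uq aV pa]; apply/and4P; split.
- by rewrite -size_eq0 size_map size_rev size_eq0.
- move: uq; rewrite !matching_free_cons => /and3P[abl mabl ub].
  rewrite (matching_free_rev ub) andbT (mem_map (can_inj muK)) mem_rev abl andbT.
  by apply/mapP=> [[y]]; rewrite mem_rev => ys ay; move: mabl; rewrite ay muK ys.
- move: aV => /= /andP[-> /allP bV] /=.
  by apply/allP=> x /mapP[y]; rewrite mem_rev => ys ->; exact/muV/bV.
- by have := alt_path_rev sym pa; rewrite muK.
Qed.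

Lemma blossom_base_notin V E a bl :
  blossom V E a bl -> (a \notin body bl) && (mu a \notin body bl).
Proof.
case/and4P=> _; rewrite matching_free_cons => /and3P[abl mabl _] _ _.
by rewrite !in_body muK !negb_or abl mabl.
Qed.

Lemma body_sub V E a bl : matched_graph V E -> blossom V E a bl -> body bl \subset V.
Proof.
case=> _ _ muV _ /and4P[_ _ /= /andP[_ /allP bV] _].
by apply/subsetP=> x; rewrite in_body => /orP[/bV //|/bV /muV]; rewrite muK.
Qed.

Lemma blossom_suffix V E a bl w : blossom V E a bl -> w \in bl ->
  exists p, [/\ matching_free (w :: p), {subset w :: p <= bl}
              & path (alt_step E) w (rcons p (mu a))].
Proof.
case/and4P=> _ uq _ pa /splitPr def; move: def uq pa => [p1 p2] uq pa.
have ubl : uniq (p1 ++ w :: p2).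
  by move: uq; rewrite matching_free_cons => /and3P[_ _ /andP[]].
exists p2; split.
- apply: (matching_free_sub _ _ uq); first by move: ubl; rewrite cat_uniq => /and3P[].
  by move=> x xs; rewrite inE mem_cat xs !orbT.
- by move=> x xs; rewrite mem_cat xs orbT.
- by move: pa; rewrite rcons_cat cat_path => /andP[_] /= /andP[].
Qed.

Lemma body_walk V E a bl w : matched_graph V E -> blossom V E a bl -> w \in body bl ->
  exists p, [/\ matching_free (w :: p), all (mem (body bl)) (w :: p)
              & path (alt_step E) w (rcons p (mu a))].
Proof.
move=> gr bb; rewrite in_body => /orP[wb|mwb].
  have [p [u sub pa]] := blossom_suffix bb wb; exists p; split=> //.
  by apply/allP=> x /sub xb; rewrite /= in_body xb.
have wb : w \in map mu (rev bl) by apply/mapP; exists (mu w); rewrite ?mem_rev ?muK.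
have [p [u sub pa]] := blossom_suffix (blossom_rev gr bb) wb; exists p; split=> //.
by apply/allP=> x /sub /mapP[y]; rewrite mem_rev => yb ->; rewrite /= body_mu in_body yb.
Qed.

Lemma blossom_chord V E a bl w : matched_graph V E -> blossom V E a bl ->
  w \in body bl -> E a w -> exists s, alt_cycle V E s.
Proof.
move=> gr bb wB Eaw; have [p [uq al pa]] := body_walk gr bb wB.
have /andP[aB maB] := blossom_base_notin bb.
have BV := body_sub gr bb.
case: gr => sym _ muV _.
exists (w :: rcons p (mu a)); apply/and4P; split.
- by rewrite /= size_rcons.
- rewrite -rcons_cons matching_free_rcons uq muK andbT.
  by apply/andP; split; apply/negP=> /(allP al); rewrite /= ?(negbTE maB) ?(negbTE aB).
- rewrite -rcons_cons all_rcons; apply/andP; split.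
  + by apply: muV; case/and4P: bb => _ _ /= /andP[].
  + by apply/allP=> x /(allP al) xB; exact: (subsetP BV x xB).
- by rewrite /= rcons_path pa last_rcons /alt_step muK.
Qed.

Lemma path_weaken (e e' : rel U) (P Q : pred U) x t :
  (forall x y, P x -> Q y -> e x y -> e' x y) -> P x -> all P t -> all Q t ->
  path e x t -> path e' x t.
Proof.
move=> H; elim: t x => [//|y t IH] x Px /= /andP[Py Pt] /andP[Qy Qt] /andP[exy pt].
by rewrite (H _ _ Px Qy exy) (IH y Py Pt Qt pt).
Qed.

Definition alt_free (V : {set U}) (E : rel U) := forall s, ~~ alt_cycle V E s.

Section Contraction.
Variables (V : {set U}) (E : rel U) (a : U) (bl : seq U).
Hypothesis gr : matched_graph V E.
Hypothesis bb : blossom V E a bl.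

Local Notation B := (body bl).

Definition collapse (x : U) : U := if x \in B then mu a else x.
Definition Vc := V :\: B.
Definition Ec : rel U := fun y z => (y != z) &&
  [exists u, [exists w, [&& u \in V, w \in V, collapse u == y, collapse w == z & E u w]]].

Lemma collapse_out x : x \notin B -> collapse x = x.
Proof. by rewrite /collapse => /negbTE ->. Qed.

Lemma collapse_body x : x \in B -> collapse x = mu a.
Proof. by rewrite /collapse => ->. Qed.

Lemma base_out : a \notin B. Proof. by case/andP: (blossom_base_notin bb). Qed.
Lemma cobase_out : mu a \notin B. Proof. by case/andP: (blossom_base_notin bb). Qed.
Lemma base_in : a \in V. Proof. by case/and4P: bb => _ _ /= /andP[]. Qed.

Lemma collapse_Vc x : x \in V -> collapse x \in Vc.
Proof.
rewrite /collapse /Vc; case: ifP => xB xV; rewrite inE ?xB ?xV //.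
by case: gr => _ _ muV _; rewrite cobase_out muV // base_in.
Qed.

Lemma collapse_inv u y : collapse u = y -> y != mu a -> u = y.
Proof.
case: (boolP (u \in B)) => uB; first by rewrite collapse_body // => <-; rewrite eqxx.
by rewrite collapse_out.
Qed.

Lemma Vc_in x : x \in Vc -> x \in V.
Proof. by rewrite inE => /andP[]. Qed.

(* Outside the body nothing changes, so matching edges are kept. *)
Lemma contracted_matched : matched_graph Vc Ec.
Proof.
case: gr => sym irr muV muE; split.
- move=> x y; rewrite /Ec eq_sym; congr (_ && _).
  by apply/existsP/existsP=> -[u /existsP[w /and5P[uV wV ru rw E']]];
    exists w; apply/existsP; exists u; rewrite uV wV ru rw sym.
- by move=> x; rewrite /Ec eqxx.
- by move=> x; rewrite /Vc !in_setD body_mu => /andP[-> /muV ->].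
- move=> x; rewrite /Vc in_setD => /andP[xB xV]; rewrite /Ec eq_sym mu_nfix /=.
  apply/existsP; exists x; apply/existsP; exists (mu x).
  by rewrite xV muV // muE // collapse_out // collapse_out ?body_mu // !eqxx.
Qed.

(* The body is nonempty, so the contraction lowers the number of vertices. *)
Lemma contracted_smaller : #|Vc| < #|V|.
Proof.
case/and4P: bb => ne _ /= /andP[_ /allP bV] _.
rewrite /Vc -(cardsID B V) -[X in X < _]add0n ltn_add2r card_gt0.
case: bl ne bV => [//|z t] _ bV; apply/set0Pn; exists z.
by rewrite in_setI in_body mem_head andbT; exact: bV (mem_head _ _).
Qed.

Lemma base_Vc : a \in Vc.
Proof. by rewrite /Vc in_setD base_out base_in. Qed.

Lemma contracted_edge y z : y != mu a -> z != mu a -> Ec y z -> E y z.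
Proof.
move=> ya za /andP[_ /existsP[u /existsP[w /and5P[_ _ /eqP ru /eqP rw Euw]]]].
by rewrite -(collapse_inv ru ya) -(collapse_inv rw za).
Qed.

Lemma lift_cycle_off s :
  alt_cycle Vc Ec s -> a \notin s -> mu a \notin s -> alt_cycle V E s.
Proof.
case/and4P=> sz uq al cy nas nmas; apply/and4P; split=> //.
- by apply/allP=> x /(allP al) /Vc_in.
- apply: (sub_in_cycle _ (allss s) cy) => x y xs ys; apply: contracted_edge.
  + by apply/eqP=> e; move: nas; rewrite -(muK a) -e muK xs.
  + by apply/eqP=> e; move: nmas; rewrite -e ys.
Qed.

Lemma splice_body t w : matching_free (mu a :: t) -> all (mem Vc) (mu a :: t) ->
  path (alt_step E) (mu a) t -> w \in B -> E (mu (last (mu a) t)) w ->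
  exists s, alt_cycle V E s.
Proof.
move=> uq al pR wB Ew; have [p [uqp alp pp]] := body_walk gr bb wB.
have outB x : x \in mu a :: t -> (x \notin B) && (mu x \notin B).
  move=> /(allP al); rewrite /= /Vc in_setD => /andP[xB _].
  by rewrite body_mu xB.
exists (w :: p ++ mu a :: t); apply/and4P; split.
- by rewrite /= size_cat /= addnS.
- rewrite -cat_cons; apply: matching_free_cat => // x /(allP alp) /= xB.
  by apply/andP; split; apply/negP=> /outB; rewrite ?body_mu xB ?andbF.
- rewrite -cat_cons all_cat; apply/andP; split.
  + by apply/allP=> x /(allP alp) xB; exact: (subsetP (body_sub gr bb) x xB).
  + by apply/allP=> x /(allP al) /Vc_in.
- move: pp; rewrite rcons_path => /andP[h1 h2].
  by rewrite /= rcons_cat cat_path h1 /= h2 rcons_path pR /alt_step Ew.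
Qed.

Lemma lift_cycle_through t :
  alt_cycle Vc Ec (mu a :: t) -> a \notin t -> exists s, alt_cycle V E s.
Proof.
case/and4P=> sz uq al cy nat.
have ta x : x \in t -> x != a by move=> xt; apply: contraTneq xt => ->.
have tma x : x \in t -> x != mu a.
  move: (uq); rewrite matching_free_cons => /and3P[mat _ _] xt.
  by apply: contraTneq xt => ->.
move: cy; rewrite /= rcons_path => /andP[pt lt].
have pR : path (alt_step E) (mu a) t.
  apply: (path_weaken (P := fun x => x != a) (Q := fun x => x != mu a) _ _ _ _ pt).
  + move=> x y xa yma; apply: contracted_edge => //.
    by apply: contra_neq xa => e; rewrite -(muK x) e muK.
  + exact: mu_nfix.
  + by apply/allP=> x /ta.
  + by apply/allP=> x /tma.
have lt_ : last (mu a) t \in t by case: (t) sz => [//|z t'] _ /=; exact: mem_last.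
move: lt; rewrite /alt_step /Ec => /andP[_ /existsP[u /existsP[w]]].
case/and5P=> _ _ /eqP ru /eqP rw Euw.
have ul : u = mu (last (mu a) t).
  apply: collapse_inv ru _; apply: contra_neq (ta _ lt_) => e.
  by rewrite -(muK (last _ _)) e muK.
subst u; case: (boolP (w \in B)) => wB; first exact: splice_body wB Euw.
move: rw; rewrite collapse_out // => wma; subst w.
exists (mu a :: t); apply/and4P; split=> //.
- by apply/allP=> x /(allP al) /Vc_in.
- by rewrite /= rcons_path pR /alt_step Euw.
Qed.

(* Contraction preserves the absence of alternating cycles.  A cycle
   through [a] cannot contain [mu a], so its reversal avoids [a]; a cycle
   avoiding [a] lifts by the two previous lemmas. *)
Lemma contracted_alt_free : alt_free V E -> alt_free Vc Ec.
Proof.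
move=> nalt; suff avoid s : alt_cycle Vc Ec s -> a \notin s -> False.
  move=> s; apply/negP=> A; case: (boolP (a \in s)) => [as_|nas]; last exact: avoid A nas.
  apply: (avoid _ (alt_cycle_rev contracted_matched A)); apply/mapP=> -[x].
  rewrite mem_rev => xs ax; case/and4P: A => _ /andP[_ /allP al] _ _.
  by have := al _ as_; rewrite ax muK xs.
move=> A nas; case: (boolP (mu a \in s)) => [mas|nmas].
  have [i t Erot] := rot_to mas.
  have A' : alt_cycle Vc Ec (mu a :: t) by rewrite -Erot alt_cycle_rot.
  have nat : a \notin t by move: nas; rewrite -(mem_rot i) Erot inE negb_or => /andP[].
  have [s' A''] := lift_cycle_through A' nat.
  by move: (nalt s'); rewrite A''.
by move: (nalt s); rewrite lift_cycle_off.
Qed.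

(* A bridge of the contracted graph pulls back along [collapse] to a bridge
   of the original graph: an edge leaving the pull-back would either be the
   matching edge at [y] or an edge from the base into the body, and the
   latter closes an alternating cycle. *)
Lemma bridge_lift y A : alt_free V E -> bridge Vc Ec y A ->
  bridge V E y [set u in V | collapse u \in A].
Proof.
move=> nalt [yA Asub myA cross].
have /andP[yB yV] : (y \notin B) && (y \in V) by rewrite -in_setD (subsetP Asub).
have no_chord w : w \in B -> E a w -> False.
  by move=> wB Eaw; have [s As] := blossom_chord gr bb wB Eaw; move: (nalt s); rewrite As.
case: gr => sym _ muV _; split.
- by rewrite inE yV collapse_out.
- by apply/subsetP=> u; rewrite inE => /andP[].
- by rewrite inE collapse_out ?body_mu // (negbTE myA) andbF.
move=> u w; rewrite !inE => /andP[uV ruA] wV; rewrite wV /= => rwA Euw.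
have ne : collapse u != collapse w by apply: contraNneq rwA => <-.
have Ecuw : Ec (collapse u) (collapse w).
  rewrite /Ec ne /=; apply/existsP; exists u; apply/existsP; exists w.
  by rewrite uV wV Euw !eqxx.
have [ru rw] := cross _ _ ruA (collapse_Vc wV) rwA Ecuw.
have uy : u = y.
  case: (boolP (u \in B)) => uB; last by rewrite -ru collapse_out.
  exfalso; move: ru; rewrite collapse_body // => ya.
  have wa : w = a.
    case: (boolP (w \in B)) => wB; last by move: rw; rewrite collapse_out // -ya muK.
    by move: rw; rewrite collapse_body // -ya muK => e; move: (mu_nfix a); rewrite e eqxx.
  by subst w; apply: (no_chord u uB); rewrite sym.
split=> //; case: (boolP (w \in B)) => wB; last by rewrite -rw collapse_out.
exfalso; move: rw; rewrite collapse_body // => e.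
have ya : y = a by rewrite -(muK y) -e muK.
by subst u y; apply: (no_chord w wB).
Qed.

End Contraction.

Lemma matching_free_traject (f : U -> U) x0 n :
  (forall j, j < n -> ~~ ((iter j f x0 \in traject f x0 j)
                          || (mu (iter j f x0) \in traject f x0 j))) ->
  matching_free (traject f x0 n).
Proof.
elim: n => [_ //|n IH] H.
rewrite trajectSr matching_free_rcons IH; last by move=> j jn; apply: H; rewrite ltnS ltnW.
by have := H n (ltnSn n); rewrite negb_or => /andP[-> ->].
Qed.

Lemma first_return (f : U -> U) x0 : exists j, matching_free (traject f x0 j) &&
  ((iter j f x0 \in traject f x0 j) || (mu (iter j f x0) \in traject f x0 j)).
Proof.
pose Q j := (iter j f x0 \in traject f x0 j) || (mu (iter j f x0) \in traject f x0 j).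
have [j Qj] : exists j, Q j.
  case: (boolP [exists j : 'I_#|U|.+1, Q j]) => [/existsP[j Qj]|/existsPn H].
    by exists j.
  have /andP[u _] := matching_free_traject (n := #|U|.+1) (fun j jl => H (Ordinal jl)).
  by have := max_card (mem (traject f x0 #|U|.+1)); rewrite (card_uniqP u) size_traject ltnn.
have [k Qk kmin] := ex_minnP (ex_intro Q j Qj).
exists k; apply/andP; split=> //; apply: matching_free_traject => i ik.
by apply/negP=> /kmin; rewrite leqNgt ik.
Qed.

(* Iterating [f] until the
   first return (Lemma [first_return]) closes a loop of the walk, which is
   an alternating cycle or a blossom. *)
Section GreedyWalk.
Variables (V : {set U}) (E : rel U) (f : U -> U).
Hypothesis gr : matched_graph V E.
Hypothesis f_step : forall x, x \in V -> [&& f x \in V, E (mu x) (f x) & f x != x].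

Lemma iter_walk_in x k : x \in V -> iter k f x \in V.
Proof. by move=> xV; elim: k => [//|k IH] /=; case/and3P: (f_step IH). Qed.

Lemma walk_path x n : x \in V -> path (alt_step E) x (traject f (f x) n).
Proof.
elim: n x => [//|n IH] x xV /=.
by case/and3P: (f_step xV) => fV h _; rewrite /alt_step h IH.
Qed.

Lemma walk_suffix x0 i j : i < j ->
  drop i (traject f x0 j) = iter i f x0 :: traject f (f (iter i f x0)) (j - i).-1.
Proof.
move=> ij; rewrite -{1}(subnKC (ltnW ij)) trajectD drop_size_cat ?size_traject //.
have : 0 < j - i by rewrite subn_gt0.
by case: (j - i).
Qed.

Lemma walk_end x0 i j : i < j ->
  rcons (traject f (f (iter i f x0)) (j - i).-1) (iter j f x0)
  = traject f (f (iter i f x0)) (j - i).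
Proof.
move=> ij; have ji : 0 < j - i by rewrite subn_gt0.
rewrite -[in RHS](prednK ji) trajectSr -iterSr prednK //.
by rewrite -iterD subnK // ltnW.
Qed.

Lemma walk_loop x0 i j : x0 \in V -> matching_free (traject f x0 j) -> i < j ->
  (iter j f x0 == iter i f x0) || (iter j f x0 == mu (iter i f x0)) ->
  [&& traject f (f (iter i f x0)) (j - i).-1 != [::],
      matching_free (iter i f x0 :: traject f (f (iter i f x0)) (j - i).-1),
      all (mem V) (iter i f x0 :: traject f (f (iter i f x0)) (j - i).-1)
    & path (alt_step E) (iter i f x0)
        (rcons (traject f (f (iter i f x0)) (j - i).-1) (iter j f x0))].
Proof.
move=> x0V mf ij ret; case: gr => _ irr _ _.
have aV := iter_walk_in i x0V.
rewrite -walk_suffix // walk_end // walk_path // andbT.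
apply/and3P; split.
- rewrite -size_eq0 size_traject -lt0n -subnS subn_gt0 ltn_neqAle ij andbT.
  apply: contraTneq ret => ji; case/and3P: (f_step aV) => _ Ea fa.
  rewrite -ji iterS negb_or fa /=; apply: contraNneq (irr (mu (iter i f x0))) => e.
  by rewrite e in Ea.
- exact: matching_free_sub (drop_uniq _ (proj1 (andP mf))) (fun x => @mem_drop _ _ _ _) mf.
- by apply/allP=> x /mem_drop /trajectP[k _ ->]; exact: iter_walk_in.
Qed.

Lemma greedy_blossom x0 : alt_free V E -> x0 \in V -> exists a bl, blossom V E a bl.
Proof.
move=> nalt x0V; have [j /andP[mf ret]] := first_return f x0.
have [z zs ez] : exists2 z, z \in traject f x0 j &
    (iter j f x0 == z) || (iter j f x0 == mu z).
  case/orP: ret => zs; first by exists (iter j f x0); rewrite ?eqxx.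
  by exists (mu (iter j f x0)); rewrite ?muK ?eqxx ?orbT.
set i := index z (traject f x0 j).
have ij : i < j by rewrite -(size_traject f x0 j) index_mem.
have zi : iter i f x0 = z by rewrite -(nth_traject f ij) nth_index.
have := walk_loop x0V mf ij; rewrite zi => /(_ ez) loop.
case/orP: ez => /eqP ez; rewrite ez in loop; last by exists z, (traject f (f z) (j - i).-1).
case/and4P: loop => ne mf' al pa.
move: (nalt (z :: traject f (f z) (j - i).-1)); rewrite /alt_cycle mf' al /= pa andbT.
by case: (traject _ _ _) ne.
Qed.

End GreedyWalk.

Lemma pendant_bridge V E y : matched_graph V E -> y \in V ->
  (forall w, w \in V -> E (mu y) w -> w = y) -> bridge V E (mu y) [set mu y].
Proof.
case=> _ _ muV _ yV pend; split.
- by rewrite inE.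
- by rewrite sub1set muV.
- by rewrite inE muK eq_sym mu_nfix.
- by move=> u w; rewrite inE => /eqP -> wV _ /(pend _ wV) ->; rewrite muK.
Qed.

(* If some vertex is pendant we
   are done; otherwise the greedy walk finds a blossom, and a bridge of the
   smaller contracted graph lifts back. *)
Theorem kotzig V E : matched_graph V E -> V != set0 -> alt_free V E ->
  exists y A, bridge V E y A.
Proof.
have [n] := ubnP #|V|; elim: n V E => // n IH V E ltV gr ne nalt.
case: (boolP [exists y in V, [forall w in V, E (mu y) w ==> (w == y)]]).
  case/exists_inP=> y yV /forall_inP pend; exists (mu y), [set mu y].
  by apply: pendant_bridge => // w wV Ew; apply/eqP; move: (pend w wV); rewrite Ew.
move/exists_inPn=> nopend.
pose f x := odflt x [pick w | [&& w \in V, E (mu x) w & w != x]].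
have f_step x : x \in V -> [&& f x \in V, E (mu x) (f x) & f x != x].
  move=> xV; rewrite /f; case: pickP => [w //|none]; exfalso.
  have /forall_inPn[w wV] := nopend x xV.
  by rewrite negb_imply => Ew; move: (none w); rewrite wV Ew.
case/set0Pn: ne => x0 x0V.
have [a [bl bb]] := greedy_blossom gr f_step nalt x0V.
have ltc : #|Vc V bl| < n := leq_trans (contracted_smaller bb) ltV.
have nec : Vc V bl != set0 by apply/set0Pn; exists a; exact: base_Vc bb.
have [y [A br]] := IH _ _ ltc (contracted_matched a bl gr) nec (contracted_alt_free gr bb nalt).
by exists y, [set u in V | collapse a bl u \in A]; apply: bridge_lift.
Qed.

End Kotzig.

Lemma cycle_nthP (T : eqType) (e : rel T) x0 s : cycle e s ->
  forall i, i < size s -> e (nth x0 s i) (nth x0 s (i.+1 %% size s)).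
Proof.
case: s => [//|x t] /= /(pathP x0) H i ilt.
have := H i; rewrite size_rcons => /(_ ilt).
have -> : nth x0 (x :: rcons t x) i = nth x0 (x :: t) i.
  by rewrite -rcons_cons nth_rcons /= ilt.
rewrite nth_rcons; case: ltnP => it; first by rewrite modn_small.
have -> : i = size t by apply/eqP; rewrite eqn_leq it -ltnS ilt.
by rewrite eqxx modnn.
Qed.

(* Every vertex [v] is split
   into [(v, true)] and [(v, false)], partners of each other; besides these
   matching edges, [(v, c)] and [(w, c)] are adjacent when [vw] has colour
   [c].  An alternating step [(v, c) -> (w, ~~ c)] of the cover is an edge
   [vw] of colour [~~ c], so alternating cycles of the cover project to
   alternating cycles of the graph. *)
Section DoubleCover.
Variables (T : finType) (red blue : rel T).
Hypothesis col : two_edge_coloured red blue.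

Definition flip (p : T * bool) : T * bool := (p.1, ~~ p.2).

Definition cover_edge : rel (T * bool) := fun p q =>
  if p.1 == q.1 then p.2 != q.2 else (p.2 == q.2) && colrel red blue p.2 p.1 q.1.

Definition cover (S : {set T}) := [set p : T * bool | p.1 \in S].

Lemma flipK : involutive flip.
Proof. by case=> x b; rewrite /flip /= negbK. Qed.

Lemma flip_nfix p : flip p != p.
Proof. by case: p => x b; rewrite /flip /= xpair_eqE eqxx /=; case: b. Qed.

Lemma colrel_sym c x y : colrel red blue c x y = colrel red blue c y x.
Proof. by case: col => sr sb _ _ _; case: c; rewrite /colrel. Qed.

Lemma colrel_irr c x : colrel red blue c x x = false.
Proof. by case: col => _ _ ir ib _; case: c; rewrite /colrel ?ir ?ib. Qed.

Lemma cover_matched S : matched_graph flip (cover S) cover_edge.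
Proof.
split.
- move=> [x b] [y c]; rewrite /cover_edge /=.
  case: (x =P y) => [->|/eqP xy]; first by rewrite eqxx eq_sym.
  rewrite [y == x]eq_sym (negbTE xy) /= [c == b]eq_sym.
  by case: eqP => //= ->; exact: colrel_sym.
- by move=> [x b]; rewrite /cover_edge /= !eqxx.
- by move=> [x b]; rewrite !inE.
- by move=> [x b] _; rewrite /cover_edge /flip /= eqxx; case: b.
Qed.

Lemma cover_step x y : alt_step flip cover_edge x y -> y != x -> y != flip x ->
  [/\ x.1 != y.1, y.2 = ~~ x.2 & colrel red blue y.2 x.1 y.1].
Proof.
case: x y => [x b] [y c]; rewrite /alt_step /cover_edge /flip /=.
case: eqP => [-> | nxy]; first by case: b; case: c => //=; rewrite eqxx.
by case/andP=> /eqP <- cr _ _; split=> //; apply/eqP.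
Qed.

Lemma cover_cycle_steps V s x0 : alt_cycle flip V cover_edge s ->
  forall i, i < size s ->
  [/\ (nth x0 s i).1 != (nth x0 s (i.+1 %% size s)).1,
      (nth x0 s (i.+1 %% size s)).2 = ~~ (nth x0 s i).2 &
      colrel red blue (nth x0 s (i.+1 %% size s)).2 (nth x0 s i).1
                      (nth x0 s (i.+1 %% size s)).1].
Proof.
case/and4P=> sz /andP[us /allP nflip] _ cy i ik.
have jk : i.+1 %% size s < size s by rewrite ltn_mod; lia.
apply: cover_step; first exact: cycle_nthP.
- rewrite nth_uniq //; case: (ltnP i.+1 (size s)) => h.
    by rewrite modn_small //; lia.
  have -> : i.+1 = size s by lia.
  by rewrite modnn; lia.
- by apply: contraTneq (nflip _ (mem_nth x0 ik)) => <-; rewrite negbK mem_nth.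
Qed.

Lemma matching_free_fst_inj s : matching_free flip s -> {in s &, injective fst}.
Proof.
case/andP=> _ /allP nflip [x b] [y c] xs ys /= exy; subst y.
case: (eqVneq b c) => bc; first by rewrite bc.
move: (nflip _ xs); rewrite /flip /=.
have -> : ~~ b = c by move: bc; clear; case: b; case: c.
by rewrite ys.
Qed.

Lemma cover_cycle_project V s :
  alt_cycle flip V cover_edge s -> has_alternating_cycle red blue.
Proof.
move=> A; have steps x0 := cover_cycle_steps x0 A.
case/and4P: A => sz mf _ _; have inj := matching_free_fst_inj mf.
case: s sz mf steps inj => [//|p t] sz mf steps inj; exists (map fst (p :: t)).
rewrite /alternating_cycle size_map; split.
- case: (ltnP 2 (size (p :: t))) => // k2; exfalso.
  have ek : size (p :: t) = 2 by lia.
  have [_ e1 c1] := steps p 0 (ltn0Sn _).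
  have [_ _ c2] := steps p 1 sz.
  move: e1 c1 c2; rewrite ek /= => e1 c1 c2.
  rewrite colrel_sym in c2; rewrite e1 in c1.
  case: col => _ _ _ _ /(_ p.1 (nth p t 0).1).
  by move: c1 c2; case: (p.2); rewrite /colrel /= => -> ->.
- by rewrite map_inj_in_uniq; case/andP: mf.
- move=> i ik; rewrite !(nth_map p) ?ltn_mod //.
  have jk : i.+1 %% size (p :: t) < size (p :: t) by rewrite ltn_mod.
  have [_ e1 c1] := steps p i ik.
  have [_ e2 c2] := steps p _ jk.
  have -> : (i + 2) %% size (p :: t) = (i.+1 %% size (p :: t)).+1 %% size (p :: t).
    by rewrite -[(i.+1 %% _).+1]addn1 modnDml addn1 addn2.
  rewrite addn1.
  move: c1 c2; rewrite e2.
  by case: ((nth p (p :: t) (i.+1 %% _)).2); rewrite /colrel /= => -> ->; rewrite ?orbT.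
Qed.

Hypothesis no_cycle : ~ has_alternating_cycle red blue.

Lemma cover_alt_free S : alt_free flip (cover S) cover_edge.
Proof. by move=> s; apply/negP=> /cover_cycle_project. Qed.

Definition nbhd (c : bool) (v : T) (S : {set T}) := [set w in S | colrel red blue c v w].

(* A bridge [A] of the cover of [S] at [y] contains,
   for every vertex [v <> y.1] of [S], both copies of [v] or neither; the
   vertices with both copies form a set [side] whose only edges to the rest
   of [S] go to [y.1], and which receives all edges of colour [y.2] at
   [y.1]. *)
Section Side.
Variables (S : {set T}) (y : T * bool) (A : {set T * bool}).
Hypothesis br : bridge flip (cover S) cover_edge y A.

Definition side := [set v in S | (v != y.1) && ((v, true) \in A)].

Lemma side_copies v b : v \in S -> v != y.1 -> ((v, b) \in A) = ((v, true) \in A).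
Proof.
case: br => _ _ _ cross vS vy; case: b => //.
have vV b : (v, b) \in cover S by rewrite inE.
have out b : (v, b) \in A -> (v, ~~ b) \in A.
  move=> h; apply/negPn/negP=> h'.
  have Ev : cover_edge (v, b) (v, ~~ b) by rewrite /cover_edge /= eqxx; case: b {h h'}.
  have [e _] := cross _ _ h (vV _) h' Ev.
  by move: vy; rewrite -e eqxx.
by apply/idP/idP=> /out.
Qed.

Lemma bridge_side :
  [/\ y.1 \in S, side \subset S :\ y.1,
      forall w, w \in S -> colrel red blue y.2 y.1 w -> w \in side &
      forall v c w, v \in side -> w \in S -> colrel red blue c v w ->
        (w \in side) || (w == y.1)].
Proof.
have [yA AV myA cross] := br.
have yS : y.1 \in S by have := subsetP AV y yA; rewrite inE.
split=> //.
- by apply/subsetP=> v; rewrite !inE => /and3P[-> -> _].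
- move=> w wS cw.
  have wy : w != y.1 by apply: contraTneq cw => ->; rewrite colrel_irr.
  rewrite inE wS wy /= -(side_copies y.2) //; apply/negPn/negP=> h.
  have wV : (w, y.2) \in cover S by rewrite inE.
  have Ey : cover_edge y (w, y.2) by rewrite /cover_edge /= eq_sym (negbTE wy) eqxx.
  have [_ /(congr1 fst) /= ew] := cross _ _ yA wV h Ey.
  by move: wy; rewrite ew eqxx.
- move=> v c w; rewrite inE => /and3P[vS vy vA] wS cvw.
  case: (eqVneq w y.1) => [_|wy]; first by rewrite orbT.
  have vw : v != w by apply: contraTneq cvw => ->; rewrite colrel_irr.
  rewrite inE wS wy /= orbF -(side_copies c) //; apply/negPn/negP=> h.
  have vcA : (v, c) \in A by rewrite side_copies.
  have wV : (w, c) \in cover S by rewrite inE.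
  have Ev : cover_edge (v, c) (w, c) by rewrite /cover_edge /= (negbTE vw) eqxx.
  have [e _] := cross _ _ vcA wV h Ev.
  by move: vy; rewrite -e eqxx.
Qed.

End Side.

Lemma sides_card (S : {set T}) (y : T * bool) (A : {set T * bool}) : y.1 \in S ->
  #|side S y A| + #|side S (flip y) (cover S :\: A)| = #|S|.-1.
Proof.
move=> yS; have -> : side S (flip y) (cover S :\: A) = (S :\ y.1) :\: side S y A.
  by apply/setP=> v; rewrite !inE /flip /=; case: (v \in S); case: (v == y.1).
have sub : side S y A \subset S :\ y.1 by apply/subsetP=> v; rewrite !inE => /and3P[-> -> _].
by rewrite cardsD (setIidPr sub) subnKC ?subset_leq_card // (cardsD1 y.1 S) yS.
Qed.

Lemma small_side (S : {set T}) : S != set0 ->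
  exists z b (S1 : {set T}), [/\ z \in S, S1 \subset S :\ z, 2 * #|S1| < #|S|,
    forall w, w \in S -> colrel red blue b z w -> w \in S1 &
    forall v c w, v \in S1 -> w \in S -> colrel red blue c v w -> (w \in S1) || (w == z)].
Proof.
move=> /set0Pn[x xS].
have ne : cover S != set0 by apply/set0Pn; exists (x, true); rewrite inE.
have [y [A br]] := kotzig flipK flip_nfix (cover_matched S) ne (cover_alt_free S).
have br' := bridge_compl flipK (cover_matched S) br.
have [yS sA P1 P2] := bridge_side br.
have [_ sB Q1 Q2] := bridge_side br'.
have card := sides_card A yS.
case: (ltnP (2 * #|side S y A|) #|S|) => h; first by exists y.1, y.2, (side S y A).
exists y.1, (flip y).2, (side S (flip y) (cover S :\: A)); split=> //.
have : 0 < #|S| by apply/card_gt0P; exists x.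
lia.
Qed.

(* By induction on
   [S] through the splitting lemma: either [z] has no [b]-neighbour in [S],
   or a good vertex of [S1] gains at most the neighbour [z] in [S]. *)
Lemma low_degree_vertex (S : {set T}) : S != set0 ->
  exists v c, v \in S /\ 2 * 2 ^ #|nbhd c v S| <= #|S| + 1.
Proof.
have [n] := ubnP #|S|; elim: n S => // n IH S ltS ne.
have [z [b [S1 [zS sub lt P1 P2]]]] := small_side ne.
case: (eqVneq S1 set0) => [S10|ne1].
  exists z, b; split=> //.
  have -> : nbhd b z S = set0.
    by apply/setP=> w; rewrite !inE; apply/negP=> /andP[wS /(P1 _ wS)]; rewrite S10 inE.
  by rewrite cards0 addn1 ltnS card_gt0.
have S1S : #|S1| < #|S|.
  by apply: leq_ltn_trans (subset_leq_card sub) _; rewrite (cardsD1 z S) zS.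
have [v [c [vS1 H]]] := IH S1 (leq_trans S1S ltS) ne1.
have vS : v \in S by have := subsetP sub v vS1; rewrite in_setD1 => /andP[].
exists v, c; split=> //.
have grow : #|nbhd c v S| <= #|nbhd c v S1|.+1.
  have nsub : nbhd c v S \subset nbhd c v S1 :|: [set z].
    apply/subsetP=> w; rewrite !inE => /andP[wS cw].
    by case/orP: (P2 v c w vS1 wS cw) => ->; rewrite ?cw ?orbT.
  apply: leq_trans (subset_leq_card nsub) _.
  by rewrite -addn1 -(cards1 z) leq_card_setU.
have : 2 ^ #|nbhd c v S| <= 2 * 2 ^ #|nbhd c v S1| by rewrite -expnS leq_pexp2l.
move: H lt; set X := 2 ^ _; set Y := 2 ^ _; lia.
Qed.

End DoubleCover.

(* Repeatedly removing a vertex given by the degree lemma orders [S] so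
   that every vertex has, for some colour, few neighbours of that colour
   among the later vertices. *)
Lemma low_degree_ordering (T : finType) (red blue : rel T) (S : {set T}) :
  two_edge_coloured red blue -> ~ has_alternating_cycle red blue ->
  exists s : seq T, [/\ uniq s, s =i S & forall x0 i, i < size s -> exists c,
    2 * 2 ^ #|nbhd red blue c (nth x0 s i) [set w in drop i.+1 s]| <= size s - i + 1].
Proof.
move=> col no_cycle; have [n] := ubnP #|S|; elim: n S => // n IH S ltS.
case: (eqVneq S set0) => [->|ne]; first by exists [::]; split=> // x; rewrite inE.
have [v [c [vS H]]] := low_degree_vertex col no_cycle ne.
have [|s [us eqs P]] := IH (S :\ v); first by move: ltS; rewrite (cardsD1 v S) vS.
have sizes : (size s).+1 = #|S|.
  by rewrite -(card_uniqP us) (eq_card eqs) (cardsD1 v S) vS.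
exists (v :: s); split.
- by rewrite /= us andbT eqs in_setD1 eqxx.
- by move=> x; rewrite inE eqs in_setD1; case: (eqVneq x v) => [->|].
move=> x0 [_|i]; last by apply: P.
exists c; rewrite /= drop0 subn0 sizes; apply: leq_trans H; rewrite leq_mul2l leq_pexp2l //.
apply: subset_leq_card; apply/subsetP=> w.
by rewrite !inE eqs in_setD1 => /andP[/andP[_ ->] ->].
Qed.

(* Index a low-degree ordering of all vertices by ['I_n]; the
   later [c]-neighbours of [v_i] inject into the set counted by the ordering
   lemma, and [2 * 2 ^ d <= n + 1] with [n >= 2] gives [2 ^ d < n]. *)
Theorem mainTheorem3 (T : finType) (red blue : rel T) :
  two_edge_coloured red blue ->
  2 <= #|T| ->
  ~ has_alternating_cycle red blue ->
  exists v : 'I_#|T| -> T,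
    bijective v /\
    forall i : 'I_#|T|, exists c : bool,
      lt_log2 #|[set j : 'I_#|T| | (i < j) && colrel red blue c (v i) (v j)]| #|T|.
Proof.
move=> col n2 no_cycle.
have [s [us eqs P]] := low_degree_ordering [set: T] col no_cycle.
have sz : size s = #|T| by rewrite -(card_uniqP us) (eq_card eqs) cardsT.
have /card_gt0P[x0 _] : 0 < #|T| by lia.
pose v (i : 'I_#|T|) := nth x0 s i.
have vinj : injective v by move=> i j /eqP; rewrite nth_uniq ?sz // => /eqP /val_inj.
exists v; split; first by apply: inj_card_bij; rewrite // card_ord.
move=> i; have [|c H] := P x0 i; first by rewrite sz.
exists c; rewrite /lt_log2.
have later : v @: [set j : 'I_#|T| | (i < j) && colrel red blue c (v i) (v j)]
              \subset nbhd red blue c (v i) [set w in drop i.+1 s].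
  apply/subsetP=> w /imsetP[j]; rewrite !inE => /andP[ij cj] ->; rewrite cj andbT.
  rewrite /v -[val j](subnKC ij) -nth_drop mem_nth // size_drop sz.
  by have := ltn_ord j; lia.
have := subset_leq_card later; rewrite card_imset // => /(leq_pexp2l (isT : 0 < 2)).
move: H; rewrite sz; set X := 2 ^ _; set Y := 2 ^ _; lia.
Qed.
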